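(* For every positive integer $n$ and every nonnegative integer $q$, $$\left\langle\!\left\langle{n\atop q}\right\rangle\!\right\rangle=\sum_{i=0}^n(-1)^{q-i}\binom{n-i-1}{q-i}\left\{\!\left\{{n+i+1\atop i+1}\right\}\!\right\}.$$
   Context: Binomial coefficients are $\binom{a}{b}=a(a-1)\cdots(a-b+1)/b!$ for integers $b\ge0$ (any integer $a$) and $\binom{a}{b}=0$ for $b<0$. The second-order Eulerian numbers $\langle\langle{n\atop k}\rangle\rangle$ are defined by $\langle\langle{0\atop k}\rangle\rangle=1$ if $k=0$ and $0$ otherwise, $\langle\langle{n\atop k}\rangle\rangle=0$ for $k<0$, and $\langle\langle{n\atop k}\rangle\rangle=(k+1)\langle\langle{n-1\atop k}\rangle\rangle+(2n-k-1)\langle\langle{n-1\atop k-1}\rangle\rangle$ for $n\ge1$. The second-order Stirling numbers $\{\{{n\atop k}\}\}$ are the numbers of partitions of an $n$-element set into $k$ blocks each of size at least $2$; equivalently $\{\{{0\atop 0}\}\}=1$, $\{\{{n\atop k}\}\}=0$ when $n<0$ or $k\le0$ with $(n,k)\ne(0,0)$, and $\{\{{n\atop k}\}\}=k\{\{{n-1\atop k}\}\}+(n-1)\{\{{n-2\atop k-1}\}\}$ for $n\ge1$. *)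

From mathcomp Require Import all_boot all_order all_algebra.
Set Implicit Arguments. Unset Strict Implicit. Unset Printing Implicit Defensive.
Import Order.TTheory GRing.Theory Num.Theory.
Local Open Scope ring_scope.

Definition gbinom (a b : int) : rat :=
  match b with
  | Posz m => (\prod_(j < m) (a%:~R - (j : nat)%:R)) / (m`!)%:R
  | Negz _ => 0
  end.

(* Second-order Eulerian numbers <<n k>> (k < 0 gives 0, so k : nat). *)
Fixpoint euler2 (n k : nat) : int :=
  match n with
  | 0 => (k == 0%N)%:R
  | m.+1 => (k.+1)%:R * euler2 m k
            + match k with
              | 0 => 0
              | k'.+1 => ((2 * m.+1)%:Z - k%:Z - 1) * euler2 m k'
              end
  end.

(* Second-order Stirling numbers {{n k}} via the recurrence
   {{n k}} = k {{n-1 k}} + (n-1) {{n-2 k-1}}, with value 0 at negative n. *)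
Fixpoint stirling2o (n k : nat) : nat :=
  match n with
  | 0 => (k == 0%N)
  | 1 => k * (k == 0%N)
  | (p.+1 as m).+1 => k * stirling2o m k
                      + m * (match k with 0 => 0 | k'.+1 => stirling2o p k' end)
  end.

From mathcomp Require Import all_boot all_order all_algebra.
From mathcomp Require Import ring zify.
Import Order.TTheory GRing.Theory Num.Theory.
Local Open Scope ring_scope.

(* The second-order Eulerian recurrence says that the generating polynomials
   E_(m+1)(x) = \sum_q <<m+1 q>> x^q satisfy
     E_(m+2) = (1 + (2m+2) x) E_(m+1) + x (1 - x) E_(m+1)'.
   On the basis x^i (1 - x)^k with i + k = m this operator acts by
     x^i (1-x)^k |-> (i+1) x^i (1-x)^(k+1) + (m+i+3) x^(i+1) (1-x)^k,
   so by the second-order Stirling recurrence the polynomials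
   \sum_i {{m+i+2 i+1}} x^i (1-x)^(m-i) satisfy the same recursion, with the
   same initial value 1.  Expanding (1-x)^(m-i) by the binomial theorem and
   reading off the coefficient of x^q gives the identity; its last term
   vanishes because {{2n+1 n+1}} = 0. *)

Lemma stirling2oSS N k : stirling2o N.+2 k =
  (k * stirling2o N.+1 k + N.+1 * (if k is k'.+1 then stirling2o N k' else 0))%N.
Proof. by []. Qed.

Lemma stirling2oS0 N : stirling2o N.+1 0 = 0%N.
Proof. by case: N => [|N] //; rewrite stirling2oSS muln0. Qed.

Lemma stirling2o_small N k : (N < k.*2)%N -> stirling2o N k = 0%N.
Proof.
elim/ltn_ind: N k => -[|[|N]] IH k lt_N_2k; first by case: k lt_N_2k.
  by case: k lt_N_2k => //= k _; rewrite muln0.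
rewrite stirling2oSS (IH N.+1) ?muln0 ?add0n //; last by lia.
by case: k lt_N_2k => [|k] lt_N_2k //; rewrite (IH N) ?muln0 //; lia.
Qed.

Definition stirling_coef (n i : nat) : nat := stirling2o (n + i + 1) i.+1.

Lemma stirling_coef_diag n : stirling_coef n n = 0%N.
Proof. by rewrite /stirling_coef stirling2o_small //; lia. Qed.

Lemma stirling_coefS n i : (0 < n)%N ->
  stirling_coef n.+1 i =
  (i.+1 * stirling_coef n i + (if i is i'.+1 then (n + i).+1 * stirling_coef n i' else 0))%N.
Proof.
move=> n_gt0; rewrite /stirling_coef.
have -> : (n.+1 + i + 1 = (n + i).+2)%N by rewrite addn1 addSn.
rewrite stirling2oSS addn1; case: i => [|i]; last by rewrite addn1 addnS.
by case: n n_gt0 => // n _; rewrite addn0 stirling2oS0 muln0 addn0.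
Qed.

Lemma euler2S m q : euler2 m.+1 q =
  q.+1%:R * euler2 m q
  + (if q is q'.+1 then ((2 * m.+1)%:Z - q%:Z - 1) * euler2 m q' else 0).
Proof. by []. Qed.

Lemma prod_sub_natr (a b : nat) :
  \prod_(j < b) ((a%:R : rat) - (j : nat)%:R) = (a ^_ b)%:R.
Proof.
elim: b => [|b IH]; first by rewrite big_ord0 ffactn0.
rewrite big_ord_recr /= IH ffactnSr.
have [le_b_a | lt_a_b] := leqP b a; first by rewrite natrM natrB.
by rewrite ffact_small // mul0n mul0r.
Qed.

Lemma gbinom_nat (a b : nat) : gbinom a b = 'C(a, b)%:R.
Proof.
rewrite /gbinom [(a : int)%:~R]/= prod_sub_natr -bin_ffact natrM mulfK //.
by rewrite pnatr_eq0 -lt0n fact_gt0.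
Qed.

Section EulerianOperator.

Variable R : comNzRingType.

Local Notation Y := (1 - 'X : {poly R}).

Definition eulerian_op (m : nat) (P : {poly R}) : {poly R} :=
  (1 + 'X *+ (2 * m + 2)) * P + 'X * Y * P^`().

Lemma eulerian_opD m : {morph eulerian_op m : P Q / P + Q}.
Proof. by move=> P Q; rewrite /eulerian_op derivD; ring. Qed.

Lemma eulerian_op0 m : eulerian_op m 0 = 0.
Proof. by rewrite /eulerian_op deriv0 !mulr0 addr0. Qed.

Lemma eulerian_opMn m P c : eulerian_op m (P *+ c) = eulerian_op m P *+ c.
Proof. by rewrite /eulerian_op derivMn !mulrnAr mulrnDl. Qed.

Lemma eulerian_op_sum m (I : finType) (F : I -> {poly R}) :
  eulerian_op m (\sum_i F i) = \sum_i eulerian_op m (F i).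
Proof. exact: (big_morph _ (eulerian_opD m) (eulerian_op0 m)). Qed.

Lemma eulerian_opE m P : eulerian_op m P =
  P + ('X * P) *+ (2 * m + 2) + 'X * P^`() - 'X * ('X * P^`()).
Proof. by rewrite /eulerian_op; ring. Qed.

Lemma coef_eulerian_op0 m P : (eulerian_op m P)`_0 = P`_0.
Proof. by rewrite eulerian_opE !coefB !coefD coefMn !coefXM /= mul0rn subr0 !addr0. Qed.

Lemma coef_eulerian_opS m P q : (eulerian_op m P)`_q.+1 =
  q.+2%:R * P`_q.+1 + ((2 * m + 2)%:R - q%:R) * P`_q.
Proof.
rewrite eulerian_opE !coefB !coefD coefMn !coefXM /= !coef_deriv.
by case: q => [|q] /=; ring.
Qed.

Lemma mulX_derivXn i : 'X * ('X^i)^`() = 'X^i *+ i :> {poly R}.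
Proof.
rewrite derivXn; case: i => [|i]; first by rewrite !mulr0n mulr0.
by rewrite /= mulrnAr exprS.
Qed.

Lemma mulY_derivYn k : Y * (Y ^+ k)^`() = - (Y ^+ k *+ k).
Proof.
rewrite deriv_exp derivB derivC derivX sub0r.
case: k => [|k]; first by rewrite !mulr0n mulr0 oppr0.
by rewrite /= mulrnAr mulN1r mulrN exprS mulNrn.
Qed.

Lemma eulerian_op_basis m i : (i <= m)%N ->
  eulerian_op m ('X^i * Y ^+ (m - i)) =
  ('X^i * Y ^+ (m - i).+1) *+ i.+1 + ('X^(i.+1) * Y ^+ (m - i)) *+ (m + 3 + i).
Proof.
move=> le_i_m; set k := (m - i)%N.
have -> : m = (i + k)%N by rewrite subnKC.
rewrite /eulerian_op derivM.
have -> : 'X * Y * (('X^i)^`() * Y ^+ k + 'X^i * (Y ^+ k)^`())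
   = Y * Y ^+ k * ('X * ('X^i)^`()) + 'X * 'X^i * (Y * (Y ^+ k)^`()) by ring.
by rewrite mulX_derivXn mulY_derivYn !exprSr !mulrnAr; ring.
Qed.

Lemma coef_Yn k r : (Y ^+ k)`_r = (-1) ^+ r * 'C(k, r)%:R.
Proof.
elim: k r => [|k IH] r.
  by rewrite expr0 coef1; case: r => [|r]; rewrite ?expr0 ?mul1r ?bin0n ?mulr0.
rewrite exprS mulrBl mul1r coefB coefXM; case: r => [|r] /=.
  by rewrite subr0 IH !bin0.
by rewrite !IH binS natrD exprS; ring.
Qed.

Definition stirling_expansion (m : nat) : {poly R} :=
  \sum_(i < m.+1) ('X^i * Y ^+ (m - i)) *+ stirling_coef m.+1 i.

Lemma stirling_expansionS m :
  stirling_expansion m.+1 = eulerian_op m (stirling_expansion m).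
Proof.
rewrite /stirling_expansion eulerian_op_sum.
under [RHS]eq_bigr => i _ do
  rewrite eulerian_opMn (eulerian_op_basis m i (ltn_ord i)) mulrnDl.
under [LHS]eq_bigr => i _ do rewrite (stirling_coefS _ i (ltn0Sn m)) mulrnDr.
rewrite !big_split /=; congr (_ + _).
  rewrite big_ord_recr /= stirling_coef_diag muln0 mulr0n addr0.
  by apply: eq_bigr => i _; rewrite -mulrnA mulnC subSn // -ltnS.
rewrite big_ord_recl /= mulr0n add0r.
apply: eq_bigr => i _; rewrite /bump /= add0n -mulrnA subSS.
by congr (_ *+ _); lia.
Qed.

Lemma coef_stirling_expansion m q :
  (stirling_expansion m)`_q = (euler2 m.+1 q)%:~R.
Proof.
elim: m q => [|m IH] [|q].
- by rewrite /stirling_expansion big_ord1 mulr1 mulr1n coef1.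
- rewrite /stirling_expansion big_ord1 mulr1 mulr1n coef1.
  by case: q => [|q]; rewrite /= !mulr0 ?add0r.
- by rewrite stirling_expansionS coef_eulerian_op0 IH (euler2S m.+1) addr0 mul1r.
rewrite stirling_expansionS coef_eulerian_opS !IH (euler2S m.+1 q.+1).
move: (euler2 m.+1 q.+1) (euler2 m.+1 q) => a b.
by rewrite intrD !intrM !intrB !mulrz_nat !pmulrn ?natrM ?natrD; ring.
Qed.

End EulerianOperator.

Theorem corollary5 (n q : nat) : (0 < n)%N ->
  (euler2 n q)%:~R =
  \sum_(i < n.+1)
     (-1 : rat) ^ (q%:Z - (i : nat)%:Z)
     * gbinom (n%:Z - (i : nat)%:Z - 1) (q%:Z - (i : nat)%:Z)
     * (stirling2o (n + i + 1) (i.+1))%:R.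
Proof.
case: n => [//|m] _.
rewrite -coef_stirling_expansion coef_sum [RHS]big_ord_recr.
rewrite [X in _ * X%:R](stirling_coef_diag m.+1) mulr0 Monoid.mulm1.
apply: eq_bigr => i _; rewrite coefMn coefXnM -[LHS]mulr_natr /=; congr (_ * _).
have [lt_q_i | le_i_q] := ltnP q i.
  have -> : q%:Z - (i : nat)%:Z = Negz (i - q - 1) by rewrite NegzE; lia.
  by rewrite mulr0.
have -> : m.+1%:Z - (i : nat)%:Z - 1 = (m - i)%N by have := ltn_ord i; lia.
by rewrite subzn // coef_Yn gbinom_nat.
Qed.
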